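(* Let $\Phi$ be a countable measure-determining class of measurable functions $\phi:\mathbb{R}\to\mathbb{R}$ with $\|\phi\|_\infty\le1$, and let $$\Phi_1=\Big\{\tfrac{f+cg}{\|f+cg\|_\infty}:\ f,g\in\Phi,\ c\in\mathbb{Q},\ f+cg\not\equiv0\Big\}.$$ Let $\alpha,\mu,\nu$ be Borel probability measures on $\mathbb{R}$ with $\mu\neq\alpha$, $\nu\neq\alpha$ and $\mu\neq\nu$. For a bounded measurable $\psi$ write $\psi_0=\psi-\int\psi\,d\alpha$. Then there exists $\psi\in\Phi_1$ with $$\int\psi_0\,d\mu\neq0,\qquad \int\psi_0\,d\nu\neq0,\qquad \int\psi_0\,d\mu\neq\int\psi_0\,d\nu.$$
   Context: A class $\Phi$ of measurable functions on $\mathbb{R}$ is measure determining if, for Borel probability measures $\mu,\nu$, $\int\phi\,d\mu=\int\phi\,d\nu$ for all $\phi\in\Phi$ implies $\mu=\nu$. *)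

From HB Require Import structures.
From mathcomp Require Import all_boot all_order all_algebra.
From mathcomp Require Import all_classical all_reals all_analysis.
Set Implicit Arguments. Unset Strict Implicit. Unset Printing Implicit Defensive.
Import Order.TTheory GRing.Theory Num.Theory.
Local Open Scope classical_set_scope.
Local Open Scope ring_scope.

Definition meas_eq (R : realType) (mu nu : probability R R) : Prop :=
  forall A : set R, measurable A -> mu A = nu A.

Definition measure_determining (R : realType) (Phi : set (R -> R)) : Prop :=
  forall mu nu : probability R R,
    (forall phi, Phi phi ->
       (\int[mu]_x (phi x)%:E = \int[nu]_x (phi x)%:E)%E) ->
    meas_eq mu nu.

Definition supnorm (R : realType) (f : R -> R) : R :=
  fine (ereal_sup (range (fun x => (`|f x|)%:E))).

Definition Phi1 (R : realType) (Phi : set (R -> R)) : set (R -> R) :=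
  [set h | exists (f g : R -> R) (c : rat),
     [/\ Phi f, Phi g, (exists x, f x + ratr c * g x != 0) &
         h = (fun x => (f x + ratr c * g x) /
                       supnorm (fun y => f y + ratr c * g y))]].

Definition centered (R : realType) (alpha : probability R R) (psi : R -> R)
  : R -> R := fun x => psi x - Rintegral alpha setT psi.

From HB Require Import structures.
From mathcomp Require Import all_boot all_order all_algebra.
From mathcomp Require Import all_classical all_reals all_analysis.
From mathcomp Require Import measurable_realfun ring.

Set Implicit Arguments.
Unset Strict Implicit.
Unset Printing Implicit Defensive.
Import Order.TTheory GRing.Theory Num.Theory.
Local Open Scope classical_set_scope.
Local Open Scope ring_scope.

(* For a probability [P] write [L_P psi] for the [P]-integral of the centered
   [psi].  As [Phi] is measure determining, each of [L_mu], [L_nu] and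
   [L_mu - L_nu] is nonzero somewhere on [Phi], hence some [f, g] in [Phi]
   make each of them nonzero at [f] or at [g].  Such a functional vanishes at
   [f + c g] for at most one [c], so a large integer [c] works for all three;
   normalising [f + c g] by its positive sup norm only rescales the values. *)

Section Rintegral_lemmas.
Context {d : measure_display} {T : measurableType d} {R : realType}.

Lemma bounded_measurable_integrable (mu : {finite_measure set T -> \bar R})
    (f : T -> R) (M : R) :
  measurable_fun setT f -> (forall x, `|f x| <= M) ->
  mu.-integrable setT (EFin \o f).
Proof.
move=> mf fM; apply: measurable_bounded_integrable => //.
  by rewrite ltey_eq fin_num_measure.
rewrite /bounded_near; near=> K => x _ /=.
apply: le_trans (fM x) _; near: K; exact: nbhs_pinfty_ge (num_real M).
Unshelve. all: by end_near.
Qed.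

Lemma Rintegral_lincomb (mu : measure T R) (f g : T -> R) (r : R) :
  mu.-integrable setT (EFin \o f) -> mu.-integrable setT (EFin \o g) ->
  \int[mu]_x (f x + r * g x) = \int[mu]_x f x + r * \int[mu]_x g x.
Proof.
move=> intf intg; rewrite RintegralD //; first by rewrite RintegralZl.
by apply: eq_integrable (integrableZl measurableT r intg).
Qed.

Lemma Rintegral_eq0 (mu : measure T R) (f : T -> R) :
  (forall x, f x = 0) -> \int[mu]_x f x = 0.
Proof.
move=> f0; rewrite (eq_Rintegral _ (g := fun=> 0)); last by move=> x _.
by rewrite Rintegral_cst // mul0r.
Qed.

End Rintegral_lemmas.

Section centered.
Context {R : realType} (alpha : probability R R).

Lemma Rintegral_cst_probability (P : probability R R) (r : R) :
  \int[P]_x r = r.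
Proof.
rewrite Rintegral_cst // (_ : fine _ = 1) ?mulr1 //.
by rewrite [X in fine X]probability_setT.
Qed.

Lemma Rintegral_centered (P : probability R R) (psi : R -> R) :
  P.-integrable setT (EFin \o psi) ->
  \int[P]_x centered alpha psi x = \int[P]_x psi x - \int[alpha]_x psi x.
Proof.
move=> intpsi; rewrite RintegralB //; last exact: finite_measure_integrable_cst.
by rewrite Rintegral_cst_probability.
Qed.

Lemma Rintegral_centered_self (psi : R -> R) :
  alpha.-integrable setT (EFin \o psi) ->
  \int[alpha]_x centered alpha psi x = 0.
Proof. by move=> intpsi; rewrite Rintegral_centered // subrr. Qed.

Variables (f g : R -> R).
Hypotheses (intf : forall P : probability R R, P.-integrable setT (EFin \o f))
           (intg : forall P : probability R R, P.-integrable setT (EFin \o g)).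

Lemma integrable_lincomb (P : probability R R) (r : R) :
  P.-integrable setT (EFin \o (fun x => f x + r * g x)).
Proof.
by apply: eq_integrable (integrableD measurableT (intf P)
  (integrableZl measurableT r (intg P))).
Qed.

Lemma Rintegral_centered_lincomb (P : probability R R) (r : R) :
  \int[P]_x centered alpha (fun y => f y + r * g y) x =
  \int[P]_x centered alpha f x + r * \int[P]_x centered alpha g x.
Proof.
rewrite !Rintegral_centered ?integrable_lincomb //.
rewrite (Rintegral_lincomb _ (intf P) (intg P)).
by rewrite (Rintegral_lincomb _ (intf alpha) (intg alpha)); ring.
Qed.

Lemma Rintegral_centered_normalized (P : probability R R) (r s : R) :
  \int[P]_x centered alpha (fun y => (f y + r * g y) / s) x =
  (\int[P]_x centered alpha f x + r * \int[P]_x centered alpha g x) / s.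
Proof.
have [intP intalpha] := (integrable_lincomb P r, integrable_lincomb alpha r).
rewrite Rintegral_centered; last first.
  exact: eq_integrable (integrableZr measurableT s^-1 intP).
rewrite !RintegralZr // -mulrBl -Rintegral_centered_lincomb.
by rewrite Rintegral_centered.
Qed.

Lemma exists_lincomb_neq0 (P : probability R R) (r : R) :
  \int[P]_x centered alpha f x + r * \int[P]_x centered alpha g x != 0 ->
  exists x, f x + r * g x != 0.
Proof.
rewrite -Rintegral_centered_lincomb => int_neq0; apply: contrapT => h_nz.
have h0 x : f x + r * g x = 0 by apply: contra_notP h_nz => /eqP; exists x.
move: int_neq0; rewrite Rintegral_centered ?integrable_lincomb //.
by rewrite !Rintegral_eq0 // subrr eqxx.
Qed.

End centered.

Lemma measure_determining_separates (R : realType) (Phi : set (R -> R))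
    (alpha m1 m2 : probability R R) :
  measure_determining Phi ->
  (forall phi, Phi phi -> forall P : probability R R,
     P.-integrable setT (EFin \o phi)) ->
  ~ meas_eq m1 m2 ->
  exists2 phi, Phi phi &
    \int[m1]_x centered alpha phi x != \int[m2]_x centered alpha phi x.
Proof.
move=> Phi_det Phi_int m12; apply: contrapT => noPhi.
apply/m12/Phi_det => phi Pphi.
have int_eq : \int[m1]_x phi x = \int[m2]_x phi x.
  apply: contra_notP noPhi => /eqP neq; exists phi => //.
  by rewrite !Rintegral_centered ?Phi_int // (inj_eq (addIr _)).
rewrite -[LHS]fineK; last exact: integrable_fin_num (Phi_int _ Pphi m1).
rewrite -[RHS]fineK; last exact: integrable_fin_num (Phi_int _ Pphi m2).
by congr EFin.
Qed.

Lemma exists_pair_nonvanishing (X : Type) (R : zmodType) (S : set X)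
    (A B : X -> R) :
  (exists2 f, S f & A f != 0) -> (exists2 g, S g & B g != 0) ->
  (exists2 k, S k & A k != B k) ->
  exists f g, [/\ S f, S g & [/\ (A f != 0) || (A g != 0),
      (B f != 0) || (B g != 0) & (A f - B f != 0) || (A g - B g != 0)]].
Proof.
move=> [f Sf Af] [g Sg Bg] [k Sk]; rewrite -subr_eq0 => ABk.
have [Bf0|Bf] := eqVneq (B f) 0.
  by exists f, g; rewrite Bf0 subr0 Af Bg orbT.
have [ABf|ABf] := eqVneq (A f) (B f).
  by exists f, k; rewrite Af Bf ABk orbT.
by exists f, f; rewrite Af Bf subr_eq0 ABf.
Qed.

Lemma affine_nat_neq0_near (R : numDomainType) (x y : R) :
  (x != 0) || (y != 0) -> \forall n \near \oo, x + n%:R * y != 0.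
Proof.
move=> xy; have [[n0 root_n0]|noroot] := pselect (exists n, x + n%:R * y = 0).
  near=> n; apply/eqP => root_n.
  have : (n%:R - n0%:R) * y = 0 :> R.
    by rewrite -[RHS](subrr 0) -{1}root_n -root_n0; ring.
  move/eqP; rewrite mulf_eq0 subr_eq0 eqr_nat => /orP[/eqP nn0|/eqP y0].
    by move: nn0; apply/eqP; rewrite gtn_eqF //; near: n; exact: nbhs_infty_gt.
  by move: xy root_n0; rewrite y0 mulr0 addr0 eqxx orbF => /eqP.
by near=> n; apply/eqP => root_n; apply: noroot; exists n.
Unshelve. all: by end_near.
Qed.

Lemma exists_nat_affine3_neq0 (R : numDomainType) (x1 y1 x2 y2 x3 y3 : R) :
  (x1 != 0) || (y1 != 0) -> (x2 != 0) || (y2 != 0) ->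
  (x3 != 0) || (y3 != 0) ->
  exists n : nat,
    [/\ x1 + n%:R * y1 != 0, x2 + n%:R * y2 != 0 & x3 + n%:R * y3 != 0].
Proof.
move=> xy1 xy2 xy3; near \oo => n; exists n; split; near: n.
- exact: affine_nat_neq0_near xy1.
- exact: affine_nat_neq0_near xy2.
- exact: affine_nat_neq0_near xy3.
Unshelve. all: by end_near.
Qed.

Lemma supnorm_gt0 (R : realType) (h : R -> R) (M : R) :
  (forall x, `|h x| <= M) -> (exists x, h x != 0) -> 0 < supnorm h.
Proof.
move=> hM [x0 hx0]; apply: fine_gt0; apply/andP; split.
  apply: (@lt_le_trans _ _ (`|h x0|%:E)); first by rewrite lte_fin normr_gt0.
  by apply: ereal_sup_ubound; exists x0.
apply: (@le_lt_trans _ _ M%:E); last exact: ltry.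
by apply: ge_ereal_sup => _ [y _ <-]; rewrite lee_fin.
Qed.

Lemma lincomb_bounded (R : numDomainType) (T : Type) (f g : T -> R) (M r : R) :
  (forall x, `|f x| <= M) -> (forall x, `|g x| <= M) ->
  forall x, `|f x + r * g x| <= M + `|r| * M.
Proof.
move=> f_bnd g_bnd x; rewrite (le_trans (ler_normD _ _)) // lerD //.
by rewrite normrM ler_wpM2l.
Qed.

Theorem lemma3p5 (R : realType) (Phi : set (R -> R))
  (Phi_count : countable Phi)
  (Phi_meas : forall phi, Phi phi -> measurable_fun setT phi)
  (Phi_bnd : forall phi, Phi phi -> forall x, `|phi x| <= 1)
  (Phi_det : measure_determining Phi)
  (alpha mu nu : probability R R)
  (mu_alpha : ~ meas_eq mu alpha) (nu_alpha : ~ meas_eq nu alpha)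
  (mu_nu : ~ meas_eq mu nu) :
  exists psi, Phi1 Phi psi /\
    [/\ Rintegral mu setT (centered alpha psi) != 0,
        Rintegral nu setT (centered alpha psi) != 0 &
        Rintegral mu setT (centered alpha psi) !=
        Rintegral nu setT (centered alpha psi)].
Proof.
have Phi_int phi : Phi phi -> forall P : probability R R,
    P.-integrable setT (EFin \o phi).
  move=> Pphi P.
  exact: bounded_measurable_integrable (Phi_meas _ Pphi) (Phi_bnd _ Pphi).
have sep := measure_determining_separates alpha Phi_det Phi_int.
have sep_alpha P : ~ meas_eq P alpha ->
    exists2 phi, Phi phi & \int[P]_x centered alpha phi x != 0.
  move/sep => [phi Pphi]; rewrite Rintegral_centered_self ?Phi_int //.
  by exists phi.
have [f [g [Pf Pg [Df Dg Dfg]]]] := exists_pair_nonvanishing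
  (sep_alpha _ mu_alpha) (sep_alpha _ nu_alpha) (sep _ _ mu_nu).
have [n [Cmu Cnu Cmunu]] := exists_nat_affine3_neq0 Df Dg Dfg.
have [x0 hx0] := exists_lincomb_neq0 (Phi_int _ Pf) (Phi_int _ Pg) Cmu.
have s_gt0 := supnorm_gt0 (lincomb_bounded n%:R (Phi_bnd _ Pf) (Phi_bnd _ Pg))
  (ex_intro _ x0 hx0).
have s_neq0 : (supnorm (fun y => f y + n%:R * g y))^-1 != 0.
  by rewrite invr_neq0 // gt_eqF.
exists (fun x => (f x + n%:R * g x) / supnorm (fun y => f y + n%:R * g y)).
split; first by exists f, g, n%:R; rewrite ratr_nat; split => //; exists x0.
rewrite !(Rintegral_centered_normalized alpha (Phi_int _ Pf) (Phi_int _ Pg)).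
split; rewrite ?mulf_neq0 //.
by rewrite -subr_eq0 -mulrBl mulf_neq0 // opprD addrACA -mulrBr.
Qed.
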